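(* Fix $n,\mu\in\mathbb{N}$ and $\delta\in\mathbb{R}$. Let $S$ be the set of pairs $(x,z)\in(0,+\infty)^n\times(-\delta,+\infty)^n$ such that $x_1\geq x_2\geq\cdots\geq x_n$ and, writing $p_i=x_i^{1/\mu}-\delta$ (so that $x=(p+\delta)^{\mu\downarrow}$), $$(p+\delta)^{\mu}\succ_w (z+\delta)^{\mu}\quad\text{and}\quad \sum_{i=1}^n (p_i+\delta)^k\geq\sum_{i=1}^n (z_i+\delta)^k\ \text{ for all }k\in\{1,\dots,\mu-1\}.$$ Then $S$ is a convex subset of $\mathbb{R}^n\times\mathbb{R}^n$.
   Context: $(y+\delta)^\mu$ denotes the vector with components $(y_i+\delta)^\mu$, and $y^{\downarrow}$ the vector of components of $y$ sorted in descending order. $x\succ_w y$ (weak majorization) means $\sum_{i=1}^k x^{\downarrow}_i\geq\sum_{i=1}^k y^{\downarrow}_i$ for all $k=1,\dots,n$. (These are the hypotheses of a sufficient condition for $K\prod(s-z_i)/\prod(s-p_i)$, $K>0$, with real zeros and poles, to be logarithmically completely monotonic.) *)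

From HB Require Import structures.
From mathcomp Require Import all_boot all_order all_algebra.
From mathcomp Require Import reals exp.
Set Implicit Arguments. Unset Strict Implicit. Unset Printing Implicit Defensive.
Import Order.TTheory GRing.Theory Num.Theory.
Local Open Scope ring_scope.

Definition desc (R : realType) (n : nat) (y : 'I_n -> R) : seq R :=
  sort (fun a b : R => b <= a) [seq y i | i <- enum 'I_n].

Definition weakly_majorizes (R : realType) (n : nat) (x y : 'I_n -> R) : Prop :=
  forall k : nat, (1 <= k <= n)%N ->
    \sum_(i < k) nth 0 (desc y) i <= \sum_(i < k) nth 0 (desc x) i.

Definition S_set (R : realType) (n mu : nat) (delta : R)
    (xz : ('I_n -> R) * ('I_n -> R)) : Prop :=
  let x := xz.1 in let z := xz.2 in
  let p := fun i => powR (x i) (mu%:R^-1) - delta in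
  (forall i, 0 < x i) /\ (forall i, - delta < z i) /\
  (forall i j : 'I_n, (i <= j)%N -> x j <= x i) /\
  weakly_majorizes (fun i => (p i + delta) ^+ mu) (fun i => (z i + delta) ^+ mu) /\
  (forall k : nat, (1 <= k <= mu - 1)%N ->
     \sum_(i < n) (z i + delta) ^+ k <= \sum_(i < n) (p i + delta) ^+ k).

Definition convex_pairs (R : realType) (n : nat)
    (S : ('I_n -> R) * ('I_n -> R) -> Prop) : Prop :=
  forall (u v : ('I_n -> R) * ('I_n -> R)) (t : R),
    S u -> S v -> 0 <= t <= 1 ->
    S ((fun i => t * u.1 i + (1 - t) * v.1 i),
       (fun i => t * u.2 i + (1 - t) * v.2 i)).

Arguments S_set {R} n mu delta xz.
Arguments convex_pairs {R} n S.

(* Because x > 0, the vector p of the statement satisfies (p_i + delta)^k =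
   x_i^(k/mu), so S is cut out by inequalities "convex <= concave" in (x, z).
   A top-k sum of a vector is the maximum of its sums over k-subsets of
   indices, hence convex; composed with the convex map z |-> (z + delta)^mu it
   stays convex in z, while on nonincreasing x it is just the (linear) sum of
   the first k entries.  For 0 < k < mu, the power sums of z + delta are convex
   in z and the sums of x_i^(k/mu) are concave in x. *)

From mathcomp Require Import all_boot all_order all_algebra perm.
From mathcomp Require Import reals exp interval_inference hoelder.
From mathcomp Require Import ring lra zify.
Import Order.TTheory GRing.Theory Num.Theory.
Set Implicit Arguments. Unset Strict Implicit. Unset Printing Implicit Defensive.
Local Open Scope ring_scope.

Lemma ler_sum_set_exchange (R : numDomainType) (T : finType) (y : T -> R)
    (B C : {set T}) (c : R) :
  #|B| = #|C| -> {in B :\: C, forall i, y i <= c} ->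
  {in C :\: B, forall i, c <= y i} ->
  \sum_(i in B) y i <= \sum_(i in C) y i.
Proof.
move=> card_BC yB yC.
rewrite (big_setID C) [leRHS](big_setID B) /= [C :&: B]setIC lerD2l.
have card_diff : #|B :\: C| = #|C :\: B|.
  by apply/eqP; rewrite -(eqn_add2l #|B :&: C|) cardsID setIC cardsID card_BC.
apply: (@le_trans _ _ (\sum_(i in B :\: C) c)); first exact: ler_sum.
by rewrite sumr_const card_diff -sumr_const; apply: ler_sum.
Qed.

Lemma ler_conv (R : numDomainType) (t a1 a2 b1 b2 : R) :
  0 <= t <= 1 -> a1 <= b1 -> a2 <= b2 ->
  t * a1 + (1 - t) * a2 <= t * b1 + (1 - t) * b2.
Proof. by move=> /andP[t_ge0 t_le1] ab1 ab2; rewrite lerD // ler_wpM2l // subr_ge0. Qed.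

Lemma conv_gt (R : realFieldType) (c t a b : R) :
  0 <= t <= 1 -> c < a -> c < b -> c < t * a + (1 - t) * b.
Proof.
move=> /andP[t_ge0 t_le1] ca cb.
have [->|t_neq1] := eqVneq t 1; first by rewrite subrr mul0r addr0 mul1r.
have t_lt1 : t < 1 by rewrite lt_neqAle t_neq1.
nra.
Qed.

Lemma ler_sum_conv (R : numDomainType) (I : Type) (r : seq I) (t : R)
    (y u v : I -> R) :
  (forall i, y i <= t * u i + (1 - t) * v i) ->
  \sum_(i <- r) y i <= t * \sum_(i <- r) u i + (1 - t) * \sum_(i <- r) v i.
Proof. by move=> yuv; rewrite !mulr_sumr -big_split; apply: ler_sum. Qed.

Section TopSums.
Variables (R : realType) (n : nat).
Implicit Types (y : 'I_n -> R) (k : nat).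

Definition nonincreasing y := forall i j : 'I_n, (i <= j)%N -> y j <= y i.

Definition top_sum y k := \sum_(i < k) nth 0 (desc y) i.

Lemma desc_nonincreasing y :
  nonincreasing y -> desc y = [seq y i | i <- enum 'I_n].
Proof.
move=> y_noninc; apply: sorted_sort; first by move=> a b c /[swap]; apply: le_trans.
rewrite sorted_map; apply: (@sub_sorted _ (relpre val leq)) => [i j|].
  exact: y_noninc.
by rewrite -sorted_map val_enum_ord iota_sorted.
Qed.

Lemma desc_comp_perm y (s : 'S_n) : desc (y \o s) = desc y.
Proof.
apply/perm_sortP.
- by move=> a b; apply: le_total.
- by move=> a b c /[swap]; apply: le_trans.
- by move=> a b /andP[ab ba]; apply/eqP; rewrite eq_le ab ba.
rewrite (map_comp y s); apply: perm_map; apply: uniq_perm; rewrite ?enum_uniq //.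
  by rewrite map_inj_uniq ?enum_uniq //; apply: perm_inj.
by move=> i; rewrite mem_enum -[i](permKV s) map_f ?mem_enum.
Qed.

Lemma exists_perm_nonincreasing y : exists s : 'S_n, nonincreasing (y \o s).
Proof.
have : perm_eq (desc y) [tuple y i | i < n] by rewrite perm_sort /=.
case/tuple_permP=> s desc_yE; exists s => i j ij.
have desc_sorted : sorted (fun a b : R => b <= a) (desc y).
  by apply: sort_sorted => a b; apply: le_total.
have := sorted_leq_nth (fun a b c ba cb => le_trans cb ba) (@lexx _ _) 0 desc_sorted.
move=> /(_ i j); rewrite !inE size_sort size_map size_enum_ord !ltn_ord.
rewrite desc_yE /= !(nth_map i) -?enumT ?size_enum_ord //.
by rewrite !nth_ord_enum !tnth_mktuple; apply.
Qed.

Lemma top_sum_nonincreasing y k (k_le_n : (k <= n)%N) :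
  nonincreasing y -> top_sum y k = \sum_(i < k) y (widen_ord k_le_n i).
Proof.
move=> y_noninc; rewrite /top_sum desc_nonincreasing //; apply: eq_bigr => i _.
have i_lt_n : (i < n)%N by apply: leq_trans k_le_n.
rewrite (nth_map (widen_ord k_le_n i)) ?size_enum_ord //.
by rewrite -[nat_of_ord i]/(nat_of_ord (widen_ord k_le_n i)) nth_ord_enum.
Qed.

Lemma top_sum_comp_perm y (s : 'S_n) k : top_sum (y \o s) k = top_sum y k.
Proof. by rewrite /top_sum desc_comp_perm. Qed.

Lemma sum_inj_le_prefix y k (k_le_n : (k <= n)%N) (tau : 'I_k -> 'I_n) :
  nonincreasing y -> injective tau ->
  \sum_(i < k) y (tau i) <= \sum_(i < k) y (widen_ord k_le_n i).
Proof.
move=> y_noninc tau_inj.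
case: k => [|k] in k_le_n tau tau_inj *; first by rewrite !big_ord0.
have widen_inj : injective (widen_ord k_le_n) by move=> a b /(congr1 val) /= /val_inj.
rewrite -(big_imset y (h := tau) (A := predT)); last exact: in2W.
rewrite -(big_imset y (h := widen_ord _) (A := predT)); last exact: in2W.
apply: (ler_sum_set_exchange (c := y (Ordinal k_le_n))).
- by rewrite !card_imset.
- move=> i /setDP[_ i_notin]; apply: y_noninc; rewrite /= leqNgt.
  apply: contra i_notin => i_lt; apply/imsetP.
  by exists (@Ordinal k.+1 i (ltnW i_lt)) => //; apply: val_inj.
- by move=> _ /setDP[/imsetP[j _ ->] _]; apply: y_noninc; rewrite /= -ltnS.
Qed.

Lemma sum_inj_le_top_sum y k (tau : 'I_k -> 'I_n) :
  injective tau -> \sum_(i < k) y (tau i) <= top_sum y k.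
Proof.
move=> tau_inj.
have k_le_n : (k <= n)%N by have := leq_card tau tau_inj; rewrite !card_ord.
have [s ys_noninc] := exists_perm_nonincreasing y.
rewrite -(top_sum_comp_perm y s) (top_sum_nonincreasing k_le_n ys_noninc).
rewrite (eq_bigr (fun i => (y \o s) (s^-1 (tau i))%g)) => [|i _]; last by rewrite /= permKV.
by apply: sum_inj_le_prefix => // i j /perm_inj; apply: tau_inj.
Qed.

Lemma top_sum_attained y k : (k <= n)%N ->
  exists2 tau : 'I_k -> 'I_n, injective tau & top_sum y k = \sum_(i < k) y (tau i).
Proof.
move=> k_le_n; have [s ys_noninc] := exists_perm_nonincreasing y.
exists (s \o widen_ord k_le_n); first by move=> a b /perm_inj /(congr1 val) /= /val_inj.
by rewrite -(top_sum_comp_perm y s) (top_sum_nonincreasing k_le_n ys_noninc).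
Qed.

Lemma eq_weakly_majorizes x x' y y' :
  x =1 x' -> y =1 y' -> weakly_majorizes x y = weakly_majorizes x' y'.
Proof. by move=> ex ey; rewrite /weakly_majorizes /desc (eq_map ex) (eq_map ey). Qed.

Section ConvexCombination.
Variable t : R.
Hypothesis t01 : 0 <= t <= 1.

Lemma nonincreasing_conv u v : nonincreasing u -> nonincreasing v ->
  nonincreasing (fun i => t * u i + (1 - t) * v i).
Proof.
by move=> u_noninc v_noninc i j ij; apply: ler_conv; [|apply: u_noninc|apply: v_noninc].
Qed.

Lemma top_sum_le_conv y u v k : (k <= n)%N ->
  (forall i, y i <= t * u i + (1 - t) * v i) ->
  top_sum y k <= t * top_sum u k + (1 - t) * top_sum v k.
Proof.
move=> k_le_n yuv; have [tau tau_inj ->] := top_sum_attained y k_le_n.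
apply: le_trans (ler_sum_conv _ (fun i => yuv (tau i))) _.
by apply: ler_conv => //; apply: sum_inj_le_top_sum.
Qed.

Lemma top_sum_conv u v k : (k <= n)%N -> nonincreasing u -> nonincreasing v ->
  top_sum (fun i => t * u i + (1 - t) * v i) k = t * top_sum u k + (1 - t) * top_sum v k.
Proof.
move=> k_le_n u_noninc v_noninc.
rewrite !(top_sum_nonincreasing k_le_n) //; last exact: nonincreasing_conv.
by rewrite big_split /= -!mulr_sumr.
Qed.

Lemma weakly_majorizes_conv x1 x2 y1 y2 y :
  nonincreasing x1 -> nonincreasing x2 ->
  (forall i, y i <= t * y1 i + (1 - t) * y2 i) ->
  weakly_majorizes x1 y1 -> weakly_majorizes x2 y2 ->
  weakly_majorizes (fun i => t * x1 i + (1 - t) * x2 i) y.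
Proof.
move=> x1_noninc x2_noninc yy12 maj1 maj2 k k_range; have /andP[_ k_le_n] := k_range.
apply: (le_trans (top_sum_le_conv k_le_n yy12)).
rewrite [leRHS](top_sum_conv k_le_n x1_noninc x2_noninc).
by apply: ler_conv => //; [apply: maj1 | apply: maj2].
Qed.

End ConvexCombination.
End TopSums.

Section Powers.
Variable R : realType.

Lemma exprn_powR_inv (x : R) (m k : nat) : 0 <= x ->
  (x `^ m%:R^-1) ^+ k = x `^ (k%:R / m%:R).
Proof. by move=> x_ge0; rewrite -powR_mulrn ?powR_ge0 // -powRrM mulrC. Qed.

Lemma convex_exprn (k : nat) (t a b : R) : 0 <= t <= 1 -> 0 <= a -> 0 <= b ->
  (t * a + (1 - t) * b) ^+ k <= t * a ^+ k + (1 - t) * b ^+ k.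
Proof.
move=> /andP[t_ge0 t_le1] a_ge0 b_ge0.
case: k => [|k]; first by rewrite !expr0 !mulr1 subrKC.
have k1_ge1 : 1 <= k.+1%:R :> R by rewrite ler1n.
have := convex_powR k1_ge1 (Itv01 t_ge0 t_le1) (x := a) (y := b).
rewrite !classical_sets.in_setE /= !in_itv /= !andbT => /(_ a_ge0 b_ge0).
have conv_ge0 : 0 <= t * a + (1 - t) * b by rewrite addr_ge0 // mulr_ge0 ?subr_ge0.
by move=> convexity; rewrite -!powR_mulrn //; apply: convexity.
Qed.

Lemma concave_powR (q t a b : R) : 0 < q <= 1 -> 0 <= t <= 1 -> 0 <= a -> 0 <= b ->
  t * a `^ q + (1 - t) * b `^ q <= (t * a + (1 - t) * b) `^ q.
Proof.
move=> /andP[q_gt0 q_le1] /andP[t_ge0 t_le1] a_ge0 b_ge0.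
have invq_ge1 : 1 <= q^-1 by rewrite invf_ge1.
have powRK (r x : R) : r != 0 -> 0 <= x -> (x `^ r) `^ r^-1 = x.
  by move=> r_neq0 x_ge0; rewrite -powRrM mulfV ?powRr1.
have := convex_powR invq_ge1 (Itv01 t_ge0 t_le1) (x := a `^ q) (y := b `^ q).
rewrite !classical_sets.in_setE /= !in_itv /= !andbT !powR_ge0 => /(_ isT isT).
rewrite /= !powRK ?gt_eqF // => convexity.
have lhs_ge0 : 0 <= t * a `^ q + (1 - t) * b `^ q.
  by rewrite addr_ge0 ?mulr_ge0 ?powR_ge0 ?subr_ge0.
rewrite -[leLHS](powRK q^-1) ?invr_eq0 ?gt_eqF // invrK.
apply: (ge0_ler_powR (ltW q_gt0)); rewrite ?nnegrE ?powR_ge0 //.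
by rewrite addr_ge0 ?mulr_ge0 ?subr_ge0.
Qed.

End Powers.

Section ShiftedPowers.
Variables (R : realType) (mu : nat) (delta : R).

Lemma shifted_root_exprn (x : R) (k : nat) : 0 < x ->
  (x `^ mu%:R^-1 - delta + delta) ^+ k = x `^ (k%:R / mu%:R).
Proof. by move=> x_gt0; rewrite subrK exprn_powR_inv ?ltW. Qed.

Lemma shifted_root_exprnK (x : R) : (0 < mu)%N -> 0 < x ->
  (x `^ mu%:R^-1 - delta + delta) ^+ mu = x.
Proof.
move=> mu_gt0 x_gt0.
by rewrite shifted_root_exprn // divff ?pnatr_eq0 -?lt0n // powRr1 ?ltW.
Qed.

Variable t : R.
Hypothesis t01 : 0 <= t <= 1.

Lemma shifted_exprn_conv (k : nat) (z1 z2 : R) : - delta < z1 -> - delta < z2 ->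
  (t * z1 + (1 - t) * z2 + delta) ^+ k
    <= t * (z1 + delta) ^+ k + (1 - t) * (z2 + delta) ^+ k.
Proof.
move=> z1_gt z2_gt.
have -> : t * z1 + (1 - t) * z2 + delta = t * (z1 + delta) + (1 - t) * (z2 + delta).
  by ring.
by apply: convex_exprn; rewrite // -(opprK delta) subr_ge0 ltW.
Qed.

Lemma shifted_root_exprn_conv (k : nat) (x1 x2 : R) :
  (0 < k <= mu - 1)%N -> 0 < x1 -> 0 < x2 ->
  t * (x1 `^ mu%:R^-1 - delta + delta) ^+ k
    + (1 - t) * (x2 `^ mu%:R^-1 - delta + delta) ^+ k
  <= ((t * x1 + (1 - t) * x2) `^ mu%:R^-1 - delta + delta) ^+ k.
Proof.
move=> /andP[k_gt0 k_le] x1_gt0 x2_gt0.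
have [k_lt_mu mu_gt0] : (k < mu)%N /\ (0 < mu)%N by lia.
rewrite !shifted_root_exprn ?conv_gt //.
apply: concave_powR; [|exact: t01|exact: ltW|exact: ltW].
by rewrite divr_gt0 ?ltr0n //= ler_pdivrMr ?ltr0n // mul1r ler_nat ltnW.
Qed.

End ShiftedPowers.

Theorem proposition8 (R : realType) (n mu : nat) (delta : R) :
  (0 < mu)%N -> convex_pairs n (S_set n mu delta).
Proof.
move=> mu_gt0 [x1 z1] [x2 z2] t; rewrite /S_set /=.
move=> [x1_gt0 [z1_gt [x1_noninc [maj1 pow1]]]].
move=> [x2_gt0 [z2_gt [x2_noninc [maj2 pow2]]]] t01.
have x_gt0 i : 0 < t * x1 i + (1 - t) * x2 i by apply: conv_gt.
split=> //; split; first by move=> i; apply: conv_gt.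
split; first exact: nonincreasing_conv.
split.
  have rootK (x : 'I_n -> R) : (forall i, 0 < x i) ->
      (fun i => (x i `^ mu%:R^-1 - delta + delta) ^+ mu) =1 x.
    by move=> x_pos i; apply: shifted_root_exprnK.
  rewrite !(eq_weakly_majorizes (rootK _ _) (frefl _)) // in maj1 maj2 *.
  apply: (weakly_majorizes_conv t01 x1_noninc x2_noninc _ maj1 maj2) => i.
  exact: shifted_exprn_conv.
move=> k k_range.
apply: (le_trans (ler_sum_conv _ (fun i => shifted_exprn_conv t01 k (z1_gt i) (z2_gt i)))).
apply: (le_trans (ler_conv t01 (pow1 k k_range) (pow2 k k_range))).
rewrite !mulr_sumr -big_split /=; apply: ler_sum => i _.
exact: shifted_root_exprn_conv.
Qed.
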